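(* For all positive integers $n$ and $j$, $R_n(j)=A_n(10j)$.
   Context: The continued fraction $[a_1;a_2:\dots:a_k]$ means $a_1+1/(a_2+1/(\cdots+1/a_k))$. For a sequence $(a_1,\dots,a_k)$ of positive integers with $k\ge2$, $\breve K(a_1,\dots,a_k)$ is the integer $c$ where $[a_1;a_2:\dots:a_{k-1}]=c/d$ with $\gcd(c,d)=1$, $c,d>0$ (the last entry $a_k$ is omitted). For a positive integer $n$ let $a_n=n^2+3$, $b_n=n^4+5n^2+5$, $r_n=(nb_n)^2+2$. Define $R_n(1)=\breve K(na_n,na_n,nb_n,nb_n)$, $R_n(2)=\breve K(na_n,na_n,nb_n,nb_n,nb_n,nb_n)$, and $R_n(j)=r_nR_n(j-1)-R_n(j-2)$ for $j>2$. Define $A_n(1)=1$, $A_n(2)=n(n^2+4)$, and $A_n(j)=nA_n(j-1)+A_n(j-2)$ for $j>2$. *)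

From HB Require Import structures.
From mathcomp Require Import all_boot all_order all_algebra.
Set Implicit Arguments. Unset Strict Implicit. Unset Printing Implicit Defensive.
Import Order.TTheory GRing.Theory Num.Theory.
Local Open Scope ring_scope.

Fixpoint cfrac (s : seq nat) : rat :=
  match s with
  | [::] => 0
  | [:: a] => a%:R
  | a :: t => a%:R + (cfrac t)^-1
  end.

Definition Kbreve (s : seq nat) : int := numq (cfrac (take (size s).-1 s)).

Definition a_ (n : nat) : nat := (n ^ 2 + 3)%N.
Definition b_ (n : nat) : nat := (n ^ 4 + 5 * n ^ 2 + 5)%N.
Definition r_ (n : nat) : nat := ((n * b_ n) ^ 2 + 2)%N.

Definition R1 (n : nat) : int :=
  Kbreve [:: n * a_ n; n * a_ n; n * b_ n; n * b_ n]%N.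
Definition R2 (n : nat) : int :=
  Kbreve [:: n * a_ n; n * a_ n; n * b_ n; n * b_ n; n * b_ n; n * b_ n]%N.

(* Rpair n k = (R_n(k+1), R_n(k+2)) *)
Fixpoint Rpair (n k : nat) : int * int :=
  match k with
  | 0 => (R1 n, R2 n)
  | k'.+1 => let: (x, y) := Rpair n k' in (y, (r_ n)%:Z * y - x)
  end.
(* R_n(j) for j >= 1 *)
Definition R (n j : nat) : int := (Rpair n j.-1).1.

(* Apair n k = (A_n(k+1), A_n(k+2)) *)
Fixpoint Apair (n k : nat) : nat * nat :=
  match k with
  | 0 => (1, n * (n ^ 2 + 4))%N
  | k'.+1 => let: (x, y) := Apair n k' in (y, n * y + x)%N
  end.
(* A_n(j) for j >= 1 *)
Definition A (n j : nat) : nat := (Apair n j.-1).1.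

From mathcomp Require Import all_boot all_order all_algebra ring zify.
Import Order.TTheory GRing.Theory Num.Theory.
Local Open Scope ring_scope.

(* For x^2 = n x + 1 the Lucas numbers L_m = x^m + x'^m satisfy
   L_5 = n^5 + 5 n^3 + 5 n = n b_n, hence L_10 = L_5^2 + 2 = r_n, and every
   solution u of u(k+2) = n u(k+1) + u(k) obeys u(k+20) + u(k) = L_10 u(k+10).
   So A_n(10 j) satisfies the recurrence defining R_n(j), and the two initial
   values R_n(1), R_n(2) are continuant numerators equal to A_n(10), A_n(20). *)

Fixpoint continuant (s : seq nat) : nat * nat :=
  match s with
  | [::] => (0, 1)%N
  | [:: a] => (a, 1)%N
  | a :: t => let: (p, q) := continuant t in (a * p + q, p)%N
  end.

Lemma continuantP (s : seq nat) : s != [::] -> all (leq 1) s ->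
  [/\ cfrac s = (continuant s).1%:R / (continuant s).2%:R,
      coprime (continuant s).1 (continuant s).2,
      (0 < (continuant s).1)%N & (0 < (continuant s).2)%N].
Proof.
elim: s => [//|a [|b t] IH] _; first by rewrite /= andbT divr1 coprimen1 => ->.
case/andP=> a_gt0 /(IH isT) [cfrac_bt].
have -> : cfrac (a :: b :: t) = a%:R + (cfrac (b :: t))^-1 by [].
have -> : continuant (a :: b :: t) =
  let: (p, q) := continuant (b :: t) in (a * p + q, p)%N by [].
rewrite cfrac_bt.
case: (continuant (b :: t)) => p q /= cop_pq p_gt0 _.
have p_neq0 : (p%:R : rat) != 0 by rewrite pnatr_eq0 -lt0n.
split.
- by rewrite invf_div natrD natrM; field.
- by rewrite /coprime gcdnC gcdnMDl.
- by rewrite addn_gt0 muln_gt0 a_gt0 p_gt0.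
- exact: p_gt0.
Qed.

Lemma numq_cfrac (s : seq nat) : s != [::] -> all (leq 1) s ->
  numq (cfrac s) = (continuant s).1%:Z.
Proof.
move=> s_neq0 s_pos; have [-> cop _ q_gt0] := @continuantP s s_neq0 s_pos.
have := @coprimeq_num (continuant s).1%:Z (continuant s).2%:Z.
rewrite !absz_nat -!pmulrn => /(_ cop) ->.
by rewrite gtr0_sg ?mul1r // ltz_nat.
Qed.

Section LinearRecurrence.

Variable n : nat.

Definition lin_rec (u : nat -> nat) := forall k, u k.+2 = (n * u k.+1 + u k)%N.

Lemma lin_rec_add (u v : nat -> nat) :
  lin_rec u -> lin_rec v -> lin_rec (fun k => u k + v k)%N.
Proof. by move=> rec_u rec_v k; rewrite rec_u rec_v; ring. Qed.

Lemma lin_rec_scale (u : nat -> nat) (c : nat) :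
  lin_rec u -> lin_rec (fun k => c * u k)%N.
Proof. by move=> rec_u k; rewrite rec_u; ring. Qed.

Lemma lin_rec_eq (u v : nat -> nat) : lin_rec u -> lin_rec v ->
  u 0%N = v 0%N -> u 1%N = v 1%N -> u =1 v.
Proof.
move=> rec_u rec_v u0 u1 k.
suff [] : u k = v k /\ u k.+1 = v k.+1 by [].
elim: k => [|k [uk uk1]] //.
by split=> //; rewrite rec_u rec_v uk uk1.
Qed.

End LinearRecurrence.

Lemma A_recurrence (n k : nat) : A n k.+3 = (n * A n k.+2 + A n k.+1)%N.
Proof. by rewrite /A /=; case: (Apair n k). Qed.

(* The index is shifted by one since [A n 0] is a junk value (equal to [A n 1]). *)
Lemma lin_rec_A (n m : nat) : lin_rec n (fun k => A n (k + m.+1)).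
Proof. by move=> k; rewrite !addSn addnS A_recurrence. Qed.

Lemma A_add_shift20 (n k : nat) :
  (A n (k + 21) + A n (k + 1) = r_ n * A n (k + 11))%N.
Proof.
apply: (@lin_rec_eq n (fun k => A n (k + 21) + A n (k + 1))%N
                      (fun k => r_ n * A n (k + 11))%N).
- by apply: lin_rec_add; apply: lin_rec_A.
- by apply/lin_rec_scale/lin_rec_A.
- by rewrite /A /r_ /b_ /=; ring.
- by rewrite /A /r_ /b_ /=; ring.
Qed.

Lemma R1_eq (n : nat) : (0 < n)%N -> R1 n = (A n 10)%:Z.
Proof.
move=> n_gt0; rewrite /R1 /Kbreve numq_cfrac /=.
- by apply: congr1; rewrite /A /a_ /b_ /=; ring.
- by [].
- by rewrite !muln_gt0 n_gt0 /a_ /b_ !addn_gt0 !orbT.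
Qed.

Lemma R2_eq (n : nat) : (0 < n)%N -> R2 n = (A n 20)%:Z.
Proof.
move=> n_gt0; rewrite /R2 /Kbreve numq_cfrac /=.
- by apply: congr1; rewrite /A /a_ /b_ /=; ring.
- by [].
- by rewrite !muln_gt0 n_gt0 /a_ /b_ !addn_gt0 !orbT.
Qed.

Lemma Rpair_eq (n k : nat) : (0 < n)%N ->
  Rpair n k = ((A n (10 * k.+1))%:Z, (A n (10 * k.+2))%:Z).
Proof.
move=> n_gt0; elim: k => [|k IH]; first by rewrite /= R1_eq ?R2_eq.
rewrite /= IH; congr (_, _); apply/eqP.
have := A_add_shift20 n (10 * k + 9).
have -> : (10 * k + 9 + 21 = 10 * k.+3)%N by lia.
have -> : (10 * k + 9 + 1 = 10 * k.+1)%N by lia.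
have -> : (10 * k + 9 + 11 = 10 * k.+2)%N by lia.
by move=> A_rec; rewrite subr_eq -PoszM -PoszD A_rec.
Qed.

Theorem lemma4 (n j : nat) : (0 < n)%N -> (0 < j)%N ->
  R n j = (A n (10 * j))%:Z.
Proof. by move=> n_gt0; case: j => // j _; rewrite /R /= Rpair_eq. Qed.
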